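(* Let $\mathfrak{g}$ be a finite-dimensional indecomposable metric Lie algebra with index $r>0$ admitting a maximally isotropic centre. Then as a vector space $$\mathfrak{g} = \bigoplus_{i=1}^r \left(\mathbb{R} u_i \oplus \mathbb{R} v_i\right) \oplus E,$$ where $E$ is a euclidean (positive-definite) subspace, $u_i, v_i \perp E$, $\langle u_i,v_j\rangle= \delta_{ij}$, $\langle u_i,u_j\rangle = \langle v_i,v_j\rangle = 0$ (the $v_i$ spanning the centre). Moreover the Lie bracket is given by $$[u_i,u_j] = K_{ij} + \sum_{k=1}^r L_{ijk} v_k,\qquad [u_i,x] = J_ix - \sum_{j=1}^r \langle K_{ij},x\rangle v_j,\qquad [x,y] = - \sum_{i=1}^r \langle x, J_i y\rangle v_i$$ for all $x,y\in E$ (and the $v_i$ are central), where $K_{ij} = - K_{ji} \in E$, $L_{ijk} \in \mathbb{R}$ is totally skewsymmetric in its indices, $J_i \in \mathfrak{so}(E)$, and in addition these obey $$J_i J_j - J_j J_i = 0,\qquad J_i K_{jk} + J_j K_{ki} + J_k K_{ij} = 0,\qquad \langle K_{\ell i},K_{jk}\rangle + \langle K_{\ell j},K_{ki}\rangle + \langle K_{\ell k},K_{ij}\rangle =0$$ for all indices $i,j,k,\ell\in\{1,\dots,r\}$.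
   Context: A metric Lie algebra is a real Lie algebra with a nondegenerate symmetric bilinear form $\langle-,-\rangle$ which is ad-invariant: $\langle [x,y],z\rangle = -\langle y,[x,z]\rangle$. It is indecomposable if it is not isomorphic to an orthogonal direct sum of two metric Lie algebras of positive dimension. Its index is the dimension of a maximal negative-definite subspace. A maximally isotropic centre is a subspace $Z$ of the centre of the Lie algebra whose dimension equals the index and on which the inner product vanishes identically. $\mathfrak{so}(E)$ denotes the skewsymmetric endomorphisms of the euclidean space $E$. *)

From HB Require Import structures.
From mathcomp Require Import all_boot all_order all_algebra.
From mathcomp Require Import reals.
Set Implicit Arguments. Unset Strict Implicit. Unset Printing Implicit Defensive.
Import Order.TTheory GRing.Theory Num.Theory.
Local Open Scope ring_scope.

Section MetricLie.
Variables (R : realType) (V : vectType R).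

Definition is_lie_bracket (br : V -> V -> V) : Prop :=
  [/\ (forall a x y z, br (a *: x + y) z = a *: br x z + br y z),
      (forall a x y z, br z (a *: x + y) = a *: br z x + br z y),
      (forall x, br x x = 0) &
      (forall x y z, br x (br y z) + br y (br z x) + br z (br x y) = 0)].

Definition is_metric (br : V -> V -> V) (B : V -> V -> R) : Prop :=
  [/\ (forall a x y z, B (a *: x + y) z = a * B x z + B y z),
      (forall x y, B x y = B y x),
      (forall x, (forall y, B x y = 0) -> x = 0) &
      (forall x y z, B (br x y) z = - B y (br x z))].

Definition neg_definite (B : V -> V -> R) (U : {vspace V}) : Prop :=
  forall x, x \in U -> x != 0 -> B x x < 0.

Definition pos_definite (B : V -> V -> R) (U : {vspace V}) : Prop :=
  forall x, x \in U -> x != 0 -> 0 < B x x.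

Definition has_index (B : V -> V -> R) (r : nat) : Prop :=
  (exists U : {vspace V}, neg_definite B U /\ \dim U = r) /\
  (forall U : {vspace V}, neg_definite B U -> (\dim U <= r)%N).

Definition central (br : V -> V -> V) (x : V) : Prop := forall y, br x y = 0.

Definition indecomposable (br : V -> V -> V) (B : V -> V -> R) : Prop :=
  ~ exists I J : {vspace V},
      I != 0%VS /\ J != 0%VS /\ (I + J)%VS = fullv /\ directv (I + J) /\
      (forall x y, x \in I -> y \in J -> B x y = 0 /\ br x y = 0) /\
      (forall x y, x \in I -> y \in I -> br x y \in I) /\
      (forall x y, x \in J -> y \in J -> br x y \in J).

Definition has_max_isotropic_centre (br : V -> V -> V) (B : V -> V -> R)
    (r : nat) : Prop :=
  exists Z : {vspace V},
    [/\ (forall z, z \in Z -> central br z), \dim Z = r &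
        (forall x y, x \in Z -> y \in Z -> B x y = 0)].

End MetricLie.

From HB Require Import structures.
From mathcomp Require Import all_boot all_order all_algebra.
From mathcomp Require Import reals.
From mathcomp Require Import ring lra.
Set Implicit Arguments. Unset Strict Implicit. Unset Printing Implicit Defensive.
Import Order.TTheory GRing.Theory Num.Theory.
Local Open Scope ring_scope.

(* Take a basis [v] of the maximally isotropic centre and, by Witt's
   construction, an isotropic dual family [u]; [E] is the orthogonal complement
   of all [u_i], [v_i].  The span of the [u_i - v_i / 2] is negative definite,
   of dimension the index and orthogonal to [E], so [E] is positive definite.
   A central vector outside the span of the [v_i] would produce a central
   subspace of dimension [r + 1], hence (the index bounding isotropic
   subspaces) a central vector [c] with [B c c != 0], which splits off.

   The core is that the bracket [x, y |-> pi_E [x, y]] induced on [E] vanishes.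
   Compressed to [E], every [ad u_j] is a skew derivation of it, and it agrees
   with its Hilbert-Schmidt orthogonal projection [ad s_j] onto the inner
   derivations on the orthogonal complement [C] of the centre of [E].  Hence
   the brackets [E, C] span an ideal which is the graph of a map from [E] to
   the span of the [v_i], so it is positive definite and, by indecomposability,
   zero.  Then [pi_E [E, E]], which lies in [C], is central in [E] and
   vanishes.  The stated formulas and relations follow by expanding
   brackets in the frame [(u, v, E)] and using Jacobi and ad-invariance. *)

Lemma linfunE (R : fieldType) (aT rT : vectType R) (f : aT -> rT) :
  (forall a x y, f (a *: x + y) = a *: f x + f y) -> linfun f =1 f.
Proof.
move=> f_lin.
pose lf : {linear aT -> rT} := HB.pack f (GRing.isLinear.Build R aT rT *:%R f f_lin).
exact: (lfunE lf).
Qed.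

Lemma sum_mul_delta (R : pzSemiRingType) (m : nat) (F : 'I_m -> R) j :
  \sum_(i < m) F i * (i == j)%:R = F j.
Proof.
rewrite (bigD1 j) //= eqxx mulr1 big1 ?addr0 // => i /negbTE ->.
by rewrite mulr0.
Qed.

Section SymmetricForm.
Variables (R : realFieldType) (W : vectType R) (form : W -> W -> R).
Hypothesis form_linear : forall a x y z, form (a *: x + y) z = a * form x z + form y z.
Hypothesis form_sym : forall x y, form x y = form y x.

Lemma sform0l z : form 0 z = 0.
Proof. by have := form_linear 1 0 0 z; rewrite scale1r addr0 mul1r => H; lra. Qed.
Lemma sformDl x y z : form (x + y) z = form x z + form y z.
Proof. by have := form_linear 1 x y z; rewrite scale1r mul1r. Qed.
Lemma sformZl a x z : form (a *: x) z = a * form x z.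
Proof. by have := form_linear a x 0 z; rewrite addr0 sform0l addr0. Qed.
Lemma sformNl x z : form (- x) z = - form x z.
Proof. by rewrite -scaleN1r sformZl mulN1r. Qed.
Lemma sformBl x y z : form (x - y) z = form x z - form y z.
Proof. by rewrite sformDl sformNl. Qed.
Lemma sform_suml (I : Type) (s : seq I) (P : pred I) (F : I -> W) z :
  form (\sum_(i <- s | P i) F i) z = \sum_(i <- s | P i) form (F i) z.
Proof. by elim/big_rec2: _ => [|i a b _ <-]; rewrite ?sform0l ?sformDl. Qed.
Lemma sform0r z : form z 0 = 0. Proof. by rewrite form_sym sform0l. Qed.
Lemma sformDr x y z : form z (x + y) = form z x + form z y.
Proof. by rewrite !(form_sym z) sformDl. Qed.
Lemma sformZr a x z : form z (a *: x) = a * form z x.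
Proof. by rewrite !(form_sym z) sformZl. Qed.
Lemma sformNr x z : form z (- x) = - form z x.
Proof. by rewrite !(form_sym z) sformNl. Qed.
Lemma sformBr x y z : form z (x - y) = form z x - form z y.
Proof. by rewrite !(form_sym z) sformBl. Qed.
Lemma sform_sumr (I : Type) (s : seq I) (P : pred I) (F : I -> W) z :
  form z (\sum_(i <- s | P i) F i) = \sum_(i <- s | P i) form z (F i).
Proof. by rewrite form_sym sform_suml; apply: eq_bigr => i _; rewrite form_sym. Qed.

Definition orth_family m (w : 'I_m -> W) : {vspace W} :=
  lker (linfun (fun x => \row_(k < m) form x (w k))).

Lemma memv_orth_family m (w : 'I_m -> W) x :
  x \in orth_family w <-> forall k, form x (w k) = 0.
Proof.
rewrite memv_ker linfunE => [|a y z]; last by apply/rowP => k; rewrite !mxE form_linear.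
split=> [/eqP/rowP H k | H]; first by have := H k; rewrite !mxE.
by apply/eqP/rowP => k; rewrite !mxE H.
Qed.

Lemma dim_orth_family m (w : 'I_m -> W) : (\dim {:W} <= \dim (orth_family w) + m)%N.
Proof.
have := limg_ker_dim (linfun (fun x => \row_(k < m) form x (w k))) fullv.
rewrite capfv => <-; rewrite leq_add2l.
apply: leq_trans (dimvS (subvf _)) _.
by rewrite dimvf /dim /= mul1n.
Qed.

Definition orthv (U : {vspace W}) := orth_family (fun k : 'I_(\dim U) => (vbasis U)`_k).

Lemma memv_orthv U x : x \in orthv U <-> forall y, y \in U -> form x y = 0.
Proof.
rewrite memv_orth_family; split=> [H y Uy | H k].
  rewrite (coord_vbasis Uy) sform_sumr big1 // => i _.
  by rewrite sformZr H mulr0.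
by apply: H; apply: vbasis_mem; apply: mem_nth; rewrite size_tuple.
Qed.

Lemma dim_orthv U : (\dim {:W} <= \dim (orthv U) + \dim U)%N.
Proof. exact: dim_orth_family. Qed.

Lemma exists_orth_proj (U : {vspace W}) :
  (forall a, a \in U -> a != 0 -> 0 < form a a) ->
  forall w, exists2 a, a \in U & forall a', a' \in U -> form (w - a) a' = 0.
Proof.
move=> U_pos w.
have U_orth0 : (U :&: orthv U = 0)%VS.
  apply/eqP; rewrite -subv0; apply/subvP => y /memv_capP [Uy /memv_orthv Oy].
  rewrite memv0; apply/negPn/negP => y_neq0.
  by have := U_pos y Uy y_neq0; rewrite Oy // ltxx.
have U_orth_full : (U + orthv U)%VS = fullv.
  apply/eqP; rewrite eqEdim subvf dimv_disjoint_sum // addnC.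
  exact: dim_orthv.
have : w \in (U + orthv U)%VS by rewrite U_orth_full memvf.
case/memv_addP => a Ua [p /memv_orthv Op ->].
by exists a => // a' Ua'; rewrite addrC addKr Op.
Qed.

Lemma dual_family_span m (w w' : 'I_m -> W) :
  (forall i j, form (w i) (w' j) = (i == j)%:R) ->
  (forall y, y \in (\sum_(i < m) <[w i]>)%VS -> y = \sum_i form y (w' i) *: w i) /\
  \dim (\sum_(i < m) <[w i]>)%VS = m.
Proof.
move=> dual.
have expand y : y \in (\sum_(i < m) <[w i]>)%VS -> y = \sum_i form y (w' i) *: w i.
  case/memv_sumP => vs vs_line ->.
  have vsE i : vs i = form (vs i) (w' i) *: w i.
    by have /vlineP [k ->] := vs_line i isT; rewrite sformZl dual eqxx mulr1.
  apply: eq_bigr => j _; rewrite sform_suml.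
  rewrite (eq_bigr (fun i => form (vs i) (w' i) * (i == j)%:R)); last first.
    by move=> i _; rewrite {1}vsE sformZl dual.
  by rewrite sum_mul_delta -vsE.
split=> //.
pose T : 'Hom('rV[R]_m, W) := linfun (fun c : 'rV[R]_m => \sum_i c 0 i *: w i).
have TE c : T c = \sum_i c 0 i *: w i.
  rewrite linfunE // => a c1 c2; rewrite scaler_sumr -big_split; apply: eq_bigr => i _.
  by rewrite !mxE scalerDl scalerA.
have T_ker0 : (fullv :&: lker T = 0)%VS.
  apply/eqP; rewrite -subv0; apply/subvP => c /memv_capP [_].
  rewrite memv_ker memv0 TE => /eqP Tc0; apply/eqP/rowP => j; rewrite mxE.
  have := congr1 (form^~ (w' j)) Tc0; rewrite /= sform0l sform_suml => <-.
  rewrite (eq_bigr (fun i => c 0 i * (i == j)%:R)) ?sum_mul_delta // => i _.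
  by rewrite sformZl dual.
have T_img : (T @: fullv)%VS = (\sum_(i < m) <[w i]>)%VS.
  apply/eqP; rewrite eqEsubv; apply/andP; split.
    apply/subvP => y /memv_imgP [c _ ->]; rewrite TE.
    by apply: memv_sumr => i _; apply/memvZ/memv_line.
  apply/subvP => y Hy; rewrite (expand y Hy).
  have -> : \sum_i form y (w' i) *: w i = T (\row_i form y (w' i)).
    by rewrite TE; apply: eq_bigr => i _; rewrite mxE.
  exact/memv_img/memvf.
by rewrite -T_img limg_dim_eq // dimvf /dim /= mul1n.
Qed.

Lemma exists_orth_basis (U : {vspace W}) :
  (forall a, a \in U -> a != 0 -> 0 < form a a) ->
  exists X : seq W, (forall y, y \in X -> y \in U /\ 0 < form y y) /\
    (forall x, x \in U -> x = \sum_(y <- X) (form x y / form y y) *: y).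
Proof.
move: {2}(\dim U) (leqnn (\dim U)) => n; elim: n U => [|n IHn] U.
  rewrite leqn0 dimv_eq0 => /eqP -> _; exists [::]; split=> // x.
  by rewrite memv0 big_nil => /eqP.
move=> dimU U_pos; have [U0|U_neq0] := eqVneq U 0%VS.
  exists [::]; split=> [y|x]; first by rewrite in_nil.
  by rewrite U0 memv0 big_nil => /eqP.
set e := vpick U; have Ue : e \in U := memv_pick U.
have e_pos : 0 < form e e by apply: U_pos; rewrite ?vpick0.
set U' := (U :&: orthv <[e]>)%VS.
have dimU' : (\dim U' < \dim U)%N.
  have [le eqi] := dimv_leqif_eq (capvSl U (orthv <[e]>)).
  rewrite ltn_neqAle le eqi andbT; apply/negP => /eqP U'U.
  move: Ue; rewrite -U'U => /memv_capP [_ /memv_orthv eo].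
  by move: e_pos; rewrite eo ?memv_line // ltxx.
have [X [XU' expandU']] : exists X : seq W,
    (forall y, y \in X -> y \in U' /\ 0 < form y y) /\
    (forall x, x \in U' -> x = \sum_(y <- X) (form x y / form y y) *: y).
  apply: IHn; first by rewrite -ltnS; apply: leq_trans dimU' dimU.
  by move=> a /memv_capP [Ua _]; apply: U_pos.
exists (e :: X); split.
  move=> y; rewrite in_cons => /orP [/eqP -> //|/XU' [/memv_capP [Uy _] y_pos]].
  by split.
move=> x Ux; rewrite big_cons.
set c := form x e / form e e.
have x'U' : x - c *: e \in U'.
  apply/memv_capP; split; first by apply/memvB/memvZ.
  apply/memv_orthv => y /vlineP [k ->].
  by rewrite sformZr sformBl sformZl /c mulfVK ?subrr ?mulr0 // lt0r_neq0.
have := expandU' _ x'U'.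
have -> : \sum_(y <- X) (form (x - c *: e) y / form y y) *: y =
          \sum_(y <- X) (form x y / form y y) *: y.
  apply: eq_big_seq => y /XU' [/memv_capP [_ /memv_orthv ye] _].
  by rewrite sformBl sformZl (form_sym e) ye ?memv_line // mulr0 subr0.
by move=> <-; rewrite addrC subrK.
Qed.

(* The Hilbert-Schmidt form [(A, C) |-> tr (A^T C)] on endomorphisms of a
   euclidean subspace [U], computed in an orthogonal basis [X] of [U]. *)
Section HilbertSchmidt.
Variables (U : {vspace W}) (X : seq W).
Hypothesis U_pos : forall a, a \in U -> a != 0 -> 0 < form a a.
Hypothesis XU : forall y, y \in X -> y \in U /\ 0 < form y y.
Hypothesis expandU : forall x, x \in U -> x = \sum_(y <- X) (form x y / form y y) *: y.

Definition hs_form (A C : W -> W) := \sum_(z <- X) form (A z) (C z) / form z z.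

Lemma parseval x y : x \in U -> form x y = \sum_(z <- X) form x z * form z y / form z z.
Proof.
move=> Ux; rewrite {1}(expandU Ux) sform_suml; apply: eq_bigr => z _.
by rewrite sformZl mulrAC.
Qed.

Lemma hs_form_commutator (S A C : W -> W) :
  (forall z, z \in U -> S z \in U) -> (forall z, z \in U -> A z \in U) ->
  (forall z, z \in U -> C z \in U) ->
  (forall x y, x \in U -> y \in U -> form (S x) y = - form x (S y)) ->
  (forall x y, x \in U -> y \in U -> form (A x) y = - form x (A y)) ->
  (forall x y, x \in U -> y \in U -> form (C x) y = - form x (C y)) ->
  hs_form (fun z => S (A z) - A (S z)) C = - hs_form A (fun z => S (C z) - C (S z)).
Proof.
move=> SU AU CU Sskew Askew Cskew.
have XU' z : z \in X -> z \in U by case/XU.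
have X_neq0 z : z \in X -> form z z != 0 by case/XU=> _ /lt0r_neq0.
have SA_C : \sum_(y <- X) form (S (A y)) (C y) / form y y =
            - \sum_(y <- X) form (A y) (S (C y)) / form y y.
  rewrite -sumrN; apply: eq_big_seq => y Xy.
  by rewrite Sskew ?AU ?CU ?XU' // mulNr.
have AS_C : \sum_(y <- X) form (A (S y)) (C y) / form y y =
            - \sum_(y <- X) form (A y) (C (S y)) / form y y.
  transitivity (\sum_(y <- X) \sum_(z <- X)
                  (form y (S z) * form (C (A z)) y / form y y) / form z z).
    apply: eq_big_seq => y Xy.
    rewrite Askew ?SU ?CU ?XU' // (parseval _ (SU _ (XU' _ Xy))) mulNr mulr_suml.
    rewrite -sumrN; apply: eq_big_seq => z Xz.
    have -> : form (S y) z = - form y (S z) by rewrite Sskew ?XU'.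
    have -> : form z (A (C y)) = form (C (A z)) y.
      by rewrite Cskew ?AU ?XU' // form_sym Askew ?CU ?XU' // form_sym.
    by field; rewrite !X_neq0.
  rewrite exchange_big -sumrN; apply: eq_big_seq => z Xz.
  rewrite -mulr_suml.
  have -> : \sum_(y <- X) form y (S z) * form (C (A z)) y / form y y =
            form (C (A z)) (S z).
    rewrite (parseval _ (CU _ (AU _ (XU' _ Xz)))); apply: eq_bigr => y _.
    by rewrite [form y (S z) * _]mulrC.
  by rewrite Cskew ?AU ?SU ?XU' // mulNr.
rewrite /hs_form (eq_bigr (fun y => form (S (A y)) (C y) / form y y
                                   - form (A (S y)) (C y) / form y y)); last first.
  by move=> y _; rewrite sformBl mulrBl.
rewrite big_split /= SA_C sumrN AS_C opprK -sumrN -big_split /=.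
by rewrite -sumrN; apply: eq_bigr => y _; rewrite sformBr mulrBl opprB addrC.
Qed.

Let hs_term_ge0 (A : W -> W) : (forall z, z \in U -> A z \in U) ->
  forall y, y \in X -> 0 <= form (A y) (A y) / form y y.
Proof.
move=> AU y Xy; have [Uy y_pos] := XU Xy; apply: divr_ge0; last exact: ltW.
have [->|Ay_neq0] := eqVneq (A y) 0; first by rewrite sform0l.
by apply/ltW/U_pos => //; apply: AU.
Qed.

Lemma hs_form_ge0 (A : W -> W) : (forall z, z \in U -> A z \in U) -> 0 <= hs_form A A.
Proof. by move=> AU; rewrite /hs_form big_seq; apply/sumr_ge0/hs_term_ge0. Qed.

Lemma hs_form_eq0 (A : 'End(W)) : (forall z, z \in U -> A z \in U) ->
  hs_form A A = 0 -> forall x, x \in U -> A x = 0.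
Proof.
move=> AU hsA0.
have AX0 z : z \in X -> A z = 0.
  move=> Xz; have [Uz z_pos] := XU Xz.
  move/eqP: hsA0; rewrite /hs_form big_seq_cond psumr_eq0; last first.
    by move=> y /andP [Xy _]; apply: hs_term_ge0.
  move/allP => /(_ z Xz); rewrite Xz andbT /= mulf_eq0 invr_eq0.
  rewrite (negbTE (lt0r_neq0 z_pos)) orbF => /eqP Az0.
  apply/eqP/negPn/negP => Az_neq0.
  by have := U_pos (AU _ Uz) Az_neq0; rewrite Az0 ltxx.
move=> x Ux; rewrite (expandU Ux) linear_sum big1_seq // => z /andP [_ Xz].
by rewrite linearZ /= AX0 // scaler0.
Qed.

End HilbertSchmidt.

Section Nondegenerate.
Hypothesis form_nondeg : forall x, (forall y, form x y = 0) -> x = 0.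

Lemma form_riesz (f : W -> R) : (forall a x y, f (a *: x + y) = a * f x + f y) ->
  exists x, forall y, form x y = f y.
Proof.
move=> f_lin.
have form_linr x a y z : (form x (a *: y + z) : R^o) = a *: (form x y : R^o) + form x z.
  by rewrite form_sym form_linear !(form_sym x).
pose Phi : 'Hom(W, 'Hom(W, R^o)) := linfun (fun x => linfun (fun y => form x y : R^o)).
have PhiE x y : Phi x y = form x y.
  rewrite linfunE ?linfunE // => a x1 x2; apply/lfunP => z.
  by rewrite add_lfunE scale_lfunE !linfunE // form_linear.
have Phi_ker0 : (fullv :&: lker Phi = 0)%VS.
  apply/eqP; rewrite -subv0; apply/subvP => x /memv_capP [_].
  rewrite memv_ker memv0 => /eqP Phix0; apply/eqP/form_nondeg => y.
  by rewrite -PhiE Phix0 zero_lfunE.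
have Phi_onto : (Phi @: fullv)%VS = fullv.
  apply/eqP; rewrite eqEdim subvf limg_dim_eq // !dimvf.
  by rewrite /dim /= muln1.
have : linfun (f : W -> R^o) \in (Phi @: fullv)%VS by rewrite Phi_onto memvf.
case/memv_imgP => x _ Hx; exists x => y.
by rewrite -PhiE -Hx linfunE.
Qed.

(* Witt's construction: a dual frame of an isotropic free family, corrected by
   [u_i -= 1/2 sum_k form u_i u_k v_k] so that it is isotropic as well. *)
Lemma isotropic_dual_frame m (X : m.-tuple W) :
  free X -> (forall i j : 'I_m, form X`_i X`_j = 0) ->
  exists u : 'I_m -> W,
    (forall i j : 'I_m, form (u i) X`_j = (i == j)%:R) /\
    (forall i j, form (u i) (u j) = 0).
Proof.
move=> freeX Xiso; pose v (i : 'I_m) := X`_i.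
pose f (i : 'I_m) y := coord X i (projv <<X>> y).
have f_lin i a x y : f i (a *: x + y) = a * f i x + f i y.
  by rewrite /f linearP /= linearP.
have f_v i j : f i (v j) = (j == i)%:R.
  by rewrite /f projv_id ?coord_free //; apply: memv_span; rewrite mem_nth ?size_tuple.
have [u' u'_form] := fin_all_exists (fun i => form_riesz (f_lin i)).
have u'v i j : form (u' i) (v j) = (i == j)%:R by rewrite u'_form f_v eq_sym.
pose a i k := form (u' i) (u' k).
pose u i := u' i - 2^-1 *: \sum_k a i k *: v k.
have form_comb x (c : 'I_m -> R) : form x (\sum_k c k *: v k) = \sum_k c k * form x (v k).
  by rewrite sform_sumr; apply: eq_bigr => k _; rewrite sformZr.
have comb_v (c : 'I_m -> R) j : form (\sum_k c k *: v k) (v j) = 0.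
  by rewrite form_sym form_comb big1 // => k _; rewrite Xiso mulr0.
have uv i j : form (u i) (v j) = (i == j)%:R.
  by rewrite /u sformBl sformZl comb_v mulr0 subr0 u'v.
have u'_comb i j : \sum_k a j k * form (u' i) (v k) = a j i.
  rewrite (eq_bigr (fun k => a j k * (k == i)%:R)) ?sum_mul_delta // => k _.
  by rewrite u'v eq_sym.
exists u; split=> // i j.
rewrite /u sformBl !sformBr !sformZl !sformZr.
rewrite (form_sym (\sum_k a i k *: v k) (u' j)) !form_comb !u'_comb.
rewrite (eq_bigr (fun k => 0)); last by move=> k _; rewrite comb_v mulr0.
rewrite big1 // /a (form_sym (u' j)); lra.
Qed.

End Nondegenerate.

End SymmetricForm.

Section MetricLieAlgebra.
Variables (R : realType) (V : vectType R) (br : V -> V -> V) (B : V -> V -> R).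
Hypothesis br_lie : is_lie_bracket br.
Hypothesis B_metric : is_metric br B.

Let B_linear a x y z : B (a *: x + y) z = a * B x z + B y z. Proof. by case: B_metric. Qed.
Let B_sym x y : B x y = B y x. Proof. by case: B_metric. Qed.
Let B_nondeg x : (forall y, B x y = 0) -> x = 0.
Proof. by case: B_metric => _ _ H _; apply: H. Qed.
Let B_inv x y z : B (br x y) z = - B y (br x z). Proof. by case: B_metric. Qed.
Let B0l := sform0l B_linear. Let BDl := sformDl B_linear. Let BZl := sformZl B_linear.
Let BNl := sformNl B_linear. Let BBl := sformBl B_linear. Let B_suml := sform_suml B_linear.
Let B0r := sform0r B_linear B_sym. Let BDr := sformDr B_linear B_sym.
Let BZr := sformZr B_linear B_sym. Let BNr := sformNr B_linear B_sym.
Let BBr := sformBr B_linear B_sym. Let B_sumr := sform_sumr B_linear B_sym.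

Let br_linl a x y z : br (a *: x + y) z = a *: br x z + br y z. Proof. by case: br_lie. Qed.
Let br_linr a x y z : br z (a *: x + y) = a *: br z x + br z y. Proof. by case: br_lie. Qed.
Let brxx x : br x x = 0. Proof. by case: br_lie. Qed.
Let br_jacobi x y z : br x (br y z) + br y (br z x) + br z (br x y) = 0.
Proof. by case: br_lie. Qed.

Lemma br0l z : br 0 z = 0.
Proof.
by have := br_linl 1 0 0 z; rewrite !scale1r !addr0 => /(canLR (addrK _)); rewrite subrr.
Qed.
Lemma brDl x y z : br (x + y) z = br x z + br y z.
Proof. by have := br_linl 1 x y z; rewrite !scale1r. Qed.
Lemma brZl a x z : br (a *: x) z = a *: br x z.
Proof. by have := br_linl a x 0 z; rewrite !addr0 br0l addr0. Qed.
Lemma br_suml (I : Type) (s : seq I) (P : pred I) (F : I -> V) z :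
  br (\sum_(i <- s | P i) F i) z = \sum_(i <- s | P i) br (F i) z.
Proof. by elim/big_rec2: _ => [|i a b _ <-]; rewrite ?br0l ?brDl. Qed.
Lemma br0r z : br z 0 = 0.
Proof.
by have := br_linr 1 0 0 z; rewrite !scale1r !addr0 => /(canLR (addrK _)); rewrite subrr.
Qed.
Lemma brDr x y z : br z (x + y) = br z x + br z y.
Proof. by have := br_linr 1 x y z; rewrite !scale1r. Qed.
Lemma brZr a x z : br z (a *: x) = a *: br z x.
Proof. by have := br_linr a x 0 z; rewrite !addr0 br0r addr0. Qed.
Lemma brNr x z : br z (- x) = - br z x.
Proof. by rewrite -scaleN1r brZr scaleN1r. Qed.
Lemma br_sumr (I : Type) (s : seq I) (P : pred I) (F : I -> V) z :
  br z (\sum_(i <- s | P i) F i) = \sum_(i <- s | P i) br z (F i).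
Proof. by elim/big_rec2: _ => [|i a b _ <-]; rewrite ?br0r ?brDr. Qed.

Lemma br_anti x y : br x y = - br y x.
Proof.
have := brxx (x + y); rewrite brDl !brDr !brxx add0r addr0.
by move/eqP; rewrite addr_eq0 => /eqP.
Qed.

Lemma br_jacobi_der a x y : br a (br x y) = br (br a x) y + br x (br a y).
Proof.
have := br_jacobi a x y; rewrite (br_anti y a) brNr (br_anti y (br a x)).
by move/eqP; rewrite -addrA -opprD addr_eq0 opprK => /eqP ->; rewrite addrC.
Qed.

(* The orthogonal complement of an ideal is an ideal; if the ideal is
   definite the two are complementary, which splits the Lie algebra. *)
Lemma definite_ideal_decomposes (I : {vspace V}) (eps : R) :
  indecomposable br B ->
  (forall a, a \in I -> a != 0 -> 0 < eps * B a a) -> I != 0%VS ->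
  (exists2 y, y != 0 & forall a, a \in I -> B y a = 0) ->
  (forall a x, x \in I -> br a x \in I) -> False.
Proof.
move=> B_indec I_pos I_neq0 [y0 y0_neq0 y0_orth] I_ideal.
have eps_neq0 : eps != 0.
  apply: contraNneq I_neq0 => eps0; rewrite -vpick0; apply/negPn/negP => pick_neq0.
  by have := I_pos _ (memv_pick I) pick_neq0; rewrite eps0 mul0r ltxx.
have epsB_linear a x y z : eps * B (a *: x + y) z = a * (eps * B x z) + eps * B y z.
  by rewrite B_linear mulrDr mulrCA.
have epsB_sym x y : eps * B x y = eps * B y x by rewrite B_sym.
set J := orthv B I.
have memJ y : y \in J <-> forall a, a \in I -> B y a = 0 := memv_orthv B_linear B_sym I y.
have IJ0 : (I :&: J = 0)%VS.
  apply/eqP; rewrite -subv0; apply/subvP => z /memv_capP [Iz /memJ Jz].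
  rewrite memv0; apply/negPn/negP => z_neq0.
  by have := I_pos z Iz z_neq0; rewrite Jz // mulr0 ltxx.
have J_ideal a y : y \in J -> br a y \in J.
  by move/memJ => Jy; apply/memJ => i Ii; rewrite B_inv Jy ?oppr0 // I_ideal.
apply: B_indec; exists I, J; split=> //; split; [|split; [|split; [|split; [|split]]]].
- apply/negP => /eqP J0; move: y0_neq0; have : y0 \in J by apply/memJ.
  by rewrite J0 memv0 => ->.
- apply/eqP; rewrite eqEsubv subvf /=; apply/subvP => w _.
  have [a Ia a_orth] := exists_orth_proj epsB_linear epsB_sym I_pos w.
  rewrite -(subrK a w) addrC; apply: memv_add => //; apply/memJ => a' Ia'.
  by have /eqP := a_orth a' Ia'; rewrite mulf_eq0 (negbTE eps_neq0) => /eqP.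
- exact/directv_addP.
- move=> x y Ix Jy; split; first by rewrite B_sym; apply: (memJ y).1.
  apply/eqP; rewrite -memv0 -IJ0; apply/memv_capP; split; last exact: J_ideal.
  by rewrite br_anti memvN I_ideal.
- by move=> x y _ /I_ideal.
- by move=> x y _ /J_ideal.
Qed.

Section IndexBound.
Variables (r : nat) (N : {vspace V}).
Hypothesis index_max : forall U, neg_definite B U -> (\dim U <= r)%N.
Hypothesis N_neg : neg_definite B N.
Hypothesis dimN : \dim N = r.

Lemma orth_max_neg_ge0 y : (forall n, n \in N -> B y n = 0) -> 0 <= B y y.
Proof.
move=> y_orth; rewrite leNgt; apply/negP => y_neg.
have y_neq0 : y != 0 by apply: contraTneq y_neg => ->; rewrite B0l ltxx.
have Ny0 : (N :&: <[y]> = 0)%VS.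
  apply/eqP; rewrite -subv0; apply/subvP => z /memv_capP [Nz /vlineP [k zk]].
  rewrite memv0 zk; have := y_orth _ Nz; rewrite zk BZr => /eqP.
  rewrite mulf_eq0 => /orP [/eqP -> | /eqP yy0]; first by rewrite scale0r.
  by move: y_neg; rewrite yy0 ltxx.
suff Ny_neg : neg_definite B (N + <[y]>)%VS.
  by have := index_max Ny_neg; rewrite dimv_disjoint_sum // dimN dim_vline y_neq0 addn1 ltnn.
move=> x /memv_addP [n Nn [z /vlineP [k ->] ->]] x_neq0.
have ny0 : B n y = 0 by rewrite B_sym y_orth.
rewrite !BDl !BDr !BZl !BZr ny0 (B_sym y n) ny0 !mulr0 !addr0 add0r.
have k2_ge0 : 0 <= k * k by rewrite -expr2 sqr_ge0.
have [n0|n_neq0] := eqVneq n 0.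
  rewrite n0 B0l add0r; rewrite n0 add0r in x_neq0.
  have k_neq0 : k != 0 by apply: contraNneq x_neq0 => ->; rewrite scale0r.
  have k2_gt0 : 0 < k * k by rewrite lt_def mulf_eq0 orbb k_neq0.
  nra.
have := N_neg Nn n_neq0; nra.
Qed.

(* If [B y y = 0] and [y] is orthogonal to [N], perturbing [y] along a
   vector [p] orthogonal to [N] with [B y p != 0] makes [B] negative. *)
Lemma orth_max_neg_pos y : (forall n, n \in N -> B y n = 0) -> y != 0 -> 0 < B y y.
Proof.
move=> y_orth y_neq0; rewrite lt_def orth_max_neg_ge0 // andbT.
apply: contra_neq y_neq0 => yy0; apply: B_nondeg => z.
have negB_linear a x1 x2 x3 : - B (a *: x1 + x2) x3 = a * (- B x1 x3) + - B x2 x3.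
  by rewrite B_linear opprD mulrN.
have negB_sym x1 x2 : - B x1 x2 = - B x2 x1 by rewrite B_sym.
have N_pos a : a \in N -> a != 0 -> 0 < - B a a.
  by move=> Na a_neq0; rewrite oppr_gt0 N_neg.
have [n Nn pn_orth] := exists_orth_proj negB_linear negB_sym N_pos z.
set p := z - n in pn_orth.
have p_orth n' : n' \in N -> B p n' = 0.
  by move=> Nn'; apply/eqP; rewrite -oppr_eq0 pn_orth.
rewrite -(subrK n z) -/p BDr (y_orth _ Nn) addr0.
apply/eqP/negPn/negP => yp_neq0.
set b := B y p in yp_neq0; set a := B p p.
have a_ge0 : 0 <= a by apply: orth_max_neg_ge0.
set t := - b / (a + 1).
have t_def : t * (a + 1) = - b by rewrite /t mulfVK // lt0r_neq0 //; lra.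
have b2_gt0 : 0 < b * b by rewrite lt_def mulf_eq0 orbb yp_neq0 -expr2 sqr_ge0.
have : 0 <= B (y + t *: p) (y + t *: p).
  by apply: orth_max_neg_ge0 => n' Nn'; rewrite BDl BZl y_orth // p_orth // mulr0 addr0.
rewrite !BDl !BDr !BZl !BZr yy0 (B_sym p y) -/b -/a; nra.
Qed.

Lemma isotropic_dim_le_index (U : {vspace V}) :
  (forall y, y \in U -> B y y = 0) -> (\dim U <= r)%N.
Proof.
move=> U_iso.
have UN0 : (U :&: orthv B N = 0)%VS.
  apply/eqP; rewrite -subv0; apply/subvP => y /memv_capP [Uy /(memv_orthv B_linear B_sym) Ny].
  rewrite memv0; apply/negPn/negP => y_neq0.
  by have := orth_max_neg_pos Ny y_neq0; rewrite U_iso // ltxx.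
have := @dim_orthv _ _ B N; rewrite dimN.
have := dimvS (subvf (U + orthv B N)%VS); rewrite dimv_disjoint_sum //.
by move=> le1 le2; have := leq_trans le1 le2; rewrite addnC leq_add2l.
Qed.

End IndexBound.

Section DualFrame.
Variables (r : nat) (u v : 'I_r -> V).
Hypothesis uv_dual : forall i j, B (u i) (v j) = (i == j)%:R.
Hypothesis u_iso : forall i j, B (u i) (u j) = 0.
Hypothesis v_iso : forall i j, B (v i) (v j) = 0.
Hypothesis v_central : forall i y, br (v i) y = 0.
Hypothesis index_max : forall U, neg_definite B U -> (\dim U <= r)%N.
Hypothesis B_indec : indecomposable br B.
Hypothesis r_gt0 : (0 < r)%N.

Definition Eperp := (orth_family B u :&: orth_family B v)%VS.
Definition ucomp x := \sum_i B x (v i) *: u i.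
Definition vcomp x := \sum_i B x (u i) *: v i.
Definition piE : 'End(V) := linfun (fun x => x - (ucomp x + vcomp x)).

Lemma memv_Eperp x : x \in Eperp <-> (forall i, B x (u i) = 0) /\ (forall i, B x (v i) = 0).
Proof.
rewrite memv_cap; split.
  by case/andP => /(memv_orth_family B_linear) ? /(memv_orth_family B_linear).
by case=> ? ?; apply/andP; split; apply/(memv_orth_family B_linear).
Qed.

Lemma B_usum_v (a : 'I_r -> R) j : B (\sum_i a i *: u i) (v j) = a j.
Proof.
rewrite B_suml (eq_bigr (fun i => a i * (i == j)%:R)) ?sum_mul_delta // => i _.
by rewrite BZl uv_dual.
Qed.
Lemma B_usum_u (a : 'I_r -> R) j : B (\sum_i a i *: u i) (u j) = 0.
Proof. by rewrite B_suml big1 // => i _; rewrite BZl u_iso mulr0. Qed.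
Lemma B_vsum_u (a : 'I_r -> R) j : B (\sum_i a i *: v i) (u j) = a j.
Proof.
rewrite B_suml (eq_bigr (fun i => a i * (i == j)%:R)) ?sum_mul_delta // => i _.
by rewrite BZl B_sym uv_dual eq_sym.
Qed.
Lemma B_vsum_v (a : 'I_r -> R) j : B (\sum_i a i *: v i) (v j) = 0.
Proof. by rewrite B_suml big1 // => i _; rewrite BZl v_iso mulr0. Qed.

Lemma piEE x : piE x = x - (ucomp x + vcomp x).
Proof.
rewrite linfunE // => a y z.
have comb_lin (c w : 'I_r -> V) : \sum_i B (a *: y + z) (c i) *: w i =
    a *: \sum_i B y (c i) *: w i + \sum_i B z (c i) *: w i.
  rewrite scaler_sumr -big_split; apply: eq_bigr => i _.
  by rewrite B_linear scalerDl scalerA.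
by rewrite /ucomp /vcomp !comb_lin addrACA scalerBr scalerDr opprD addrACA.
Qed.

Lemma piE_Eperp x : piE x \in Eperp.
Proof.
apply/memv_Eperp; split=> j; rewrite piEE BBl BDl /ucomp /vcomp.
  by rewrite B_usum_u B_vsum_u add0r subrr.
by rewrite B_usum_v B_vsum_v addr0 subrr.
Qed.

Lemma piE_id x : x \in Eperp -> piE x = x.
Proof.
case/memv_Eperp => xu xv; rewrite piEE /ucomp /vcomp !big1 ?addr0 ?subr0 // => i _.
  by rewrite xu scale0r.
by rewrite xv scale0r.
Qed.

Lemma uvE_decomp x : x = piE x + (ucomp x + vcomp x).
Proof. by rewrite piEE subrK. Qed.

Lemma B_ucomp_Eperp x y : y \in Eperp -> B (ucomp x) y = 0.
Proof.
by case/memv_Eperp => yu _; rewrite B_suml big1 // => i _; rewrite BZl (B_sym (u i)) yu mulr0.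
Qed.
Lemma B_vcomp_Eperp x y : y \in Eperp -> B (vcomp x) y = 0.
Proof.
by case/memv_Eperp => _ yv; rewrite B_suml big1 // => i _; rewrite BZl (B_sym (v i)) yv mulr0.
Qed.

Lemma B_piEl x y : y \in Eperp -> B (piE x) y = B x y.
Proof. by move=> Ey; rewrite piEE BBl BDl B_ucomp_Eperp // B_vcomp_Eperp // addr0 subr0. Qed.
Lemma B_piEr x y : x \in Eperp -> B x (piE y) = B x y.
Proof. by move=> Ex; rewrite B_sym B_piEl // B_sym. Qed.

Lemma vcomp_centrall x y : br (vcomp x) y = 0.
Proof. by rewrite /vcomp br_suml big1 // => i _; rewrite brZl v_central scaler0. Qed.
Lemma vcomp_centralr x y : br y (vcomp x) = 0.
Proof. by rewrite br_anti vcomp_centrall oppr0. Qed.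

Lemma br_decomp a y : br a y = piE (br a y) + vcomp (br a y).
Proof.
rewrite {1}(uvE_decomp (br a y)) /ucomp big1 ?add0r // => i _.
by rewrite B_inv (br_anti a) v_central oppr0 B0r oppr0 scale0r.
Qed.

Lemma span_uv_Eperp :
  ((\sum_(i < r) (<[u i]> + <[v i]>)) + Eperp)%VS = fullv /\
  \dim {:V} = (2 * r + \dim Eperp)%N.
Proof.
set S := (\sum_(i < r) (<[u i]> + <[v i]>))%VS.
pose w (k : 'I_(r + r)) := match split k with inl i => u i | inr i => v i end.
pose w' (k : 'I_(r + r)) := match split k with inl i => v i | inr i => u i end.
have ww'_dual k l : B (w k) (w' l) = (k == l)%:R.
  rewrite /w /w'; case: (split_ordP k) => i ->; case: (split_ordP l) => j ->.
  - by rewrite uv_dual eq_lshift.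
  - by rewrite u_iso eq_lrshift.
  - by rewrite v_iso eq_rlshift.
  - by rewrite B_sym uv_dual eq_rshift eq_sym.
have [expand dimS] := dual_family_span B_linear ww'_dual.
have wS : (\sum_(k < r + r) <[w k]>)%VS = S.
  rewrite big_split_ord /S big_split /=; congr (_ + _)%VS; apply: eq_bigr => i _.
    by rewrite /w (unsplitK (inl _ i)).
  by rewrite /w (unsplitK (inr _ i)).
rewrite wS in expand dimS.
have SE0 : (S :&: Eperp = 0)%VS.
  apply/eqP; rewrite -subv0; apply/subvP => y /memv_capP [Sy /memv_Eperp [yu yv]].
  rewrite memv0 (expand y Sy) big1 // => k _.
  by rewrite /w'; case: (split k) => i; rewrite ?yu ?yv scale0r.
have SE_full : (S + Eperp)%VS = fullv.
  apply/eqP; rewrite eqEsubv subvf /=; apply/subvP => x _.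
  rewrite (uvE_decomp x) addrC; apply: memv_add; last exact: piE_Eperp.
  rewrite /ucomp /vcomp -big_split /=; apply: memv_sumr => i _.
  by apply: memv_add; apply/memvZ/memv_line.
by rewrite -SE_full dimv_disjoint_sum // dimS mul2n addnn.
Qed.

Lemma max_neg_orth_Eperp : exists N : {vspace V}, [/\ neg_definite B N, \dim N = r &
  forall e, e \in Eperp -> forall n, n \in N -> B e n = 0].
Proof.
pose w i := u i - 2^-1 *: v i.
pose w' i := - w i.
have ww'_dual i j : B (w i) (w' j) = (i == j)%:R.
  rewrite /w' /w BNr !BBl !BBr !BZl !BZr u_iso uv_dual v_iso (B_sym (v i)) uv_dual.
  by rewrite [(j == i)]eq_sym; field.
have [expand dimN] := dual_family_span B_linear ww'_dual.
exists (\sum_(i < r) <[w i]>)%VS; split=> // [y Ny y_neq0 | e Ee n Nn].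
  have yy : B y y = - \sum_i B y (w' i) ^+ 2.
    rewrite {1}(expand y Ny) B_suml -sumrN; apply: eq_bigr => i _.
    by rewrite BZl (B_sym (w i)) /w' !BNr sqrrN expr2 mulNr.
  rewrite yy oppr_lt0 lt_def sumr_ge0 ?andbT => [|i _]; last exact: sqr_ge0.
  apply: contra_neq y_neq0 => sum0; rewrite (expand y Ny) big1 // => i _.
  have /eqP := psumr_eq0P (fun i _ => sqr_ge0 (B y (w' i))) sum0 (i := i) isT.
  by rewrite sqrf_eq0 => /eqP ->; rewrite scale0r.
rewrite (expand n Nn) B_sumr big1 // => i _.
by case/memv_Eperp: Ee => eu ev; rewrite BZr /w BBr BZr eu ev mulr0 subr0 mulr0.
Qed.

Lemma Eperp_pos : pos_definite B Eperp.
Proof.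
have [N [N_neg dimN N_orth]] := max_neg_orth_Eperp.
move=> e Ee e_neq0; apply: (orth_max_neg_pos index_max N_neg dimN) => // n Nn.
exact: N_orth.
Qed.

Definition Zspan := (\sum_(i < r) <[v i]>)%VS.

Let vu_dual i j : B (v i) (u j) = (i == j)%:R.
Proof. by rewrite B_sym uv_dual eq_sym. Qed.

Lemma Zspan_expand y : y \in Zspan -> y = \sum_i B y (u i) *: v i.
Proof. exact: (dual_family_span B_linear vu_dual).1. Qed.

Lemma dim_Zspan : \dim Zspan = r.
Proof. exact: (dual_family_span B_linear vu_dual).2. Qed.

Lemma Zspan_central y : y \in Zspan -> central br y.
Proof.
move/Zspan_expand => -> z; rewrite br_suml big1 // => i _.
by rewrite brZl v_central scaler0.
Qed.

(* A central vector [c] with [B c c != 0] spans a definite ideal. *)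
Lemma central_isotropic c : central br c -> B c c = 0.
Proof.
move=> c_central; apply: contra_eq r_gt0 => cc_neq0.
have c_neq0 : c != 0 by apply: contra_neq cc_neq0 => ->; rewrite B0l.
exfalso; apply: (@definite_ideal_decomposes <[c]> (B c c)) => //.
- move=> a /vlineP [k ->] a_neq0.
  have k_neq0 : k != 0 by apply: contra_neq a_neq0 => ->; rewrite scale0r.
  have -> : B c c * B (k *: c) (k *: c) = (k * B c c) ^+ 2 by rewrite BZl BZr; ring.
  by rewrite lt_def sqrf_eq0 (mulf_neq0 k_neq0 cc_neq0) sqr_ge0.
- by rewrite -dimv_eq0 dim_vline c_neq0.
- pose i0 := Ordinal r_gt0; pose t := B (v i0) c / B c c.
  exists (v i0 - t *: c) => [|a /vlineP [k ->]]; last first.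
    by rewrite BZr BBl BZl mulfVK // subrr mulr0.
  apply/eqP => vtc0; have vc : v i0 = t *: c by apply/eqP; rewrite -subr_eq0 vtc0.
  have t0 : t = 0.
    have /eqP := v_iso i0 i0; rewrite {1 2}vc BZl BZr mulrA.
    by rewrite !mulf_eq0 invr_eq0 (negbTE cc_neq0) !orbF orbb => /eqP t0; rewrite /t t0 mul0r.
  by have := uv_dual i0 i0; rewrite vc t0 scale0r B0r eqxx => /eqP; rewrite eq_sym oner_eq0.
- by move=> a y /vlineP [k ->]; rewrite brZr br_anti c_central oppr0 scaler0 mem0v.
Qed.

(* Adding a central vector outside [Zspan] would give a central, hence
   isotropic, subspace of dimension [r + 1]. *)
Lemma central_mem_Zspan x : central br x -> x \in Zspan.
Proof.
move=> x_central; apply/negPn/negP => x_notZ.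
have [N [N_neg dimN _]] := max_neg_orth_Eperp.
set W := (Zspan + <[x]>)%VS.
have Zx0 : (Zspan :&: <[x]> = 0)%VS.
  apply/eqP; rewrite -subv0; apply/subvP => z /memv_capP [Zz /vlineP [k zk]].
  rewrite memv0 zk; have [->|k_neq0] := eqVneq k 0; first by rewrite scale0r.
  by move: x_notZ; rewrite -[x](scalerK k_neq0) -zk memvZ.
have x_neq0 : x != 0 by apply: contraNneq x_notZ => ->; apply: mem0v.
have W_central y : y \in W -> central br y.
  case/memv_addP => a Za [b /vlineP [k ->] ->] z.
  by rewrite brDl brZl Zspan_central // x_central scaler0 addr0.
have W_iso y : y \in W -> B y y = 0 by move/W_central/central_isotropic.
have := isotropic_dim_le_index index_max N_neg dimN W_iso.
by rewrite dimv_disjoint_sum // dim_Zspan dim_vline x_neq0 addn1 ltnn.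
Qed.

Lemma central_iff_mem_Zspan x : central br x <-> x \in Zspan.
Proof. by split; [apply: central_mem_Zspan | apply: Zspan_central]. Qed.

Definition adE a : 'End(V) := linfun (fun y => piE (br a (piE y))).

Lemma adEE a y : adE a y = piE (br a (piE y)).
Proof. by rewrite linfunE // => c x z; rewrite linearD linearZ /= br_linr linearD linearZ. Qed.
Lemma adE_Eperp a y : y \in Eperp -> adE a y = piE (br a y).
Proof. by move=> Ey; rewrite adEE (piE_id Ey). Qed.
Lemma adE_mem a y : adE a y \in Eperp.
Proof. by rewrite adEE piE_Eperp. Qed.
Lemma adE_skew a x y : x \in Eperp -> y \in Eperp -> B (adE a x) y = - B x (adE a y).
Proof. by move=> Ex Ey; rewrite !adE_Eperp // B_piEl // B_inv B_piEr. Qed.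
Lemma br_Eperp_decomp a x : x \in Eperp -> br a x = adE a x + vcomp (br a x).
Proof. by move=> Ex; rewrite adE_Eperp // {1}br_decomp. Qed.
Lemma adE_linear c a b : adE (c *: a + b) = c *: adE a + adE b.
Proof. by apply/lfunP => y; rewrite add_lfunE scale_lfunE !adEE br_linl linearD linearZ. Qed.
Lemma adEB a b : adE (a - b) = adE a - adE b.
Proof. by have := adE_linear (-1) b a; rewrite !scaleN1r addrC => ->; rewrite addrC. Qed.
Lemma piE_br_anti x y : piE (br x y) = - piE (br y x).
Proof. by rewrite br_anti linearN. Qed.

Lemma adE_der a x y : x \in Eperp -> y \in Eperp ->
  adE a (piE (br x y)) = piE (br (adE a x) y) + piE (br x (adE a y)).
Proof.
move=> Ex Ey; rewrite adE_Eperp ?piE_Eperp //.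
have -> : br a (piE (br x y)) = br a (br x y).
  by rewrite {2}(br_decomp x y) brDr vcomp_centralr addr0.
rewrite br_jacobi_der (br_Eperp_decomp a Ex) (br_Eperp_decomp a Ey).
by rewrite brDl brDr vcomp_centrall vcomp_centralr !addr0 linearD.
Qed.

Definition adEL : 'Hom(V, 'End(V)) := linfun adE.
Lemma adELE a : adEL a = adE a.
Proof. by rewrite linfunE // => c x y; apply: adE_linear. Qed.

Definition Ecentre := (Eperp :&: lker adEL)%VS.
Definition Ecentre_perp := (Eperp :&: orthv B Ecentre)%VS.

Lemma memv_Ecentre c :
  c \in Ecentre <-> c \in Eperp /\ forall z, z \in Eperp -> piE (br c z) = 0.
Proof.
rewrite memv_cap memv_ker adELE; split.
  by case/andP => Ec /eqP adc0; split=> // z Ez; rewrite -adE_Eperp // adc0 zero_lfunE.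
case=> Ec c_central; rewrite Ec /=; apply/eqP/lfunP => y.
by rewrite adEE zero_lfunE c_central // piE_Eperp.
Qed.

Lemma memv_Ecentre_perp y :
  y \in Ecentre_perp <-> y \in Eperp /\ forall c, c \in Ecentre -> B y c = 0.
Proof.
rewrite memv_cap; split; first by case/andP => -> /(memv_orthv B_linear B_sym).
by case=> -> /(memv_orthv B_linear B_sym).
Qed.

Lemma Ecentre_adE a c : c \in Ecentre -> adE a c \in Ecentre.
Proof.
case/memv_Ecentre => Ec c_central; apply/memv_Ecentre; split; first exact: adE_mem.
move=> z Ez; have := adE_der a Ec Ez; rewrite c_central // linear0.
by rewrite [piE (br c _)]c_central ?adE_mem // addr0 => <-.
Qed.

Lemma Ecentre_perp_adE a y : y \in Ecentre_perp -> adE a y \in Ecentre_perp.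
Proof.
case/memv_Ecentre_perp => Ey y_perp; apply/memv_Ecentre_perp; split; first exact: adE_mem.
move=> c Zc; have Ec : c \in Eperp by case/memv_Ecentre: Zc.
by rewrite adE_skew // y_perp ?oppr0 // Ecentre_adE.
Qed.

Lemma Ecentre_perp_Ecentre_eq0 y : y \in Ecentre_perp -> y \in Ecentre -> y = 0.
Proof.
case/memv_Ecentre_perp => Ey y_perp Zy; apply/eqP/negPn/negP => y_neq0.
by have := Eperp_pos Ey y_neq0; rewrite y_perp // ltxx.
Qed.

Section InnerDerivations.
Variable X : seq V.
Hypothesis XE : forall y, y \in X -> y \in Eperp /\ 0 < B y y.
Hypothesis expandE : forall x, x \in Eperp -> x = \sum_(y <- X) (B x y / B y y) *: y.

Let hs (A C : 'End(V)) := hs_form B X A C.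

Let hs_linear a A C D : hs (a *: A + C) D = a * hs A D + hs C D.
Proof.
rewrite /hs /hs_form mulr_sumr -big_split; apply: eq_bigr => z _.
by rewrite add_lfunE scale_lfunE B_linear mulrDl mulrA.
Qed.

Let hs_sym A C : hs A C = hs C A.
Proof. by apply: eq_bigr => z _; rewrite B_sym. Qed.

Let hs_adE_eq0 x : hs (adE x) (adE x) = 0 -> forall z, z \in Eperp -> adE x z = 0.
Proof.
by move=> hs0; apply: (hs_form_eq0 B_linear Eperp_pos XE expandE) hs0 => y _; apply: adE_mem.
Qed.

Lemma adE_hs_pos A : A \in (adEL @: Eperp)%VS -> A != 0 -> 0 < hs A A.
Proof.
case/memv_imgP => x Ex ->; rewrite adELE => adx_neq0.
rewrite lt_def (hs_form_ge0 B_linear Eperp_pos XE (fun z _ => adE_mem x z)) andbT.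
apply: contra_neq adx_neq0 => hs0; apply/lfunP => y.
by rewrite zero_lfunE adEE -adE_Eperp ?piE_Eperp // hs_adE_eq0 ?piE_Eperp.
Qed.

(* For [w := adE a x], [adE w] is the commutator of [adE a] and [adE x] on
   [Eperp], so by invariance of the Hilbert-Schmidt form
   [hs (adE w) (adE w) = - hs (adE a) (adE (adE x w)) = 0]. *)
Lemma hs_orth_adE_Ecentre a : (forall x, x \in Eperp -> hs (adE a) (adE x) = 0) ->
  forall x, x \in Eperp -> adE a x \in Ecentre.
Proof.
move=> a_orth x Ex; set w := adE a x.
have Ew : w \in Eperp by apply: adE_mem.
suff hsw0 : hs (adE w) (adE w) = 0.
  by apply/memv_Ecentre; split=> // z Ez; rewrite -adE_Eperp // hs_adE_eq0.
have adE_comm b y : y \in Eperp ->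
    {in Eperp, adE (adE b y) =1 (fun z => adE b (adE y z) - adE y (adE b z))}.
  move=> Ey z Ez; have := adE_der b Ey Ez.
  by rewrite -!adE_Eperp ?adE_mem // => ->; rewrite addrK.
have hs_on A C D : {in Eperp, A =1 C} -> hs_form B X A D = hs_form B X C D.
  by move=> AC; apply: eq_big_seq => z Xz; rewrite (AC z (XE Xz).1).
have hs_onr A C D : {in Eperp, C =1 D} -> hs_form B X A C = hs_form B X A D.
  by move=> CD; apply: eq_big_seq => z Xz; rewrite (CD z (XE Xz).1).
have adE_stable b z : z \in Eperp -> adE b z \in Eperp by move=> _; apply: adE_mem.
rewrite /hs (hs_on _ _ _ (adE_comm a x Ex)).
have -> : hs_form B X (fun z => adE a (adE x z) - adE x (adE a z)) (adE w) =
    - hs_form B X (fun z => adE x (adE a z) - adE a (adE x z)) (adE w).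
  by rewrite /hs_form -sumrN; apply: eq_bigr => z _; rewrite -opprB BNl mulNr.
rewrite (hs_form_commutator B_linear B_sym XE expandE (adE_stable x) (adE_stable a)
  (adE_stable w) (@adE_skew x) (@adE_skew a) (@adE_skew w)) opprK.
rewrite (hs_onr _ _ (adE (adE x w))); first by apply/a_orth/adE_mem.
by move=> z Ez; rewrite (adE_comm x w Ew z Ez).
Qed.

(* Every [adE a] agrees with an inner derivation [adE s] on [Ecentre_perp]: take
   for [adE s] the hs-orthogonal projection of [adE a] on [adE Eperp]. *)
Lemma adE_inner_on_Ecentre_perp a :
  exists2 s, s \in Eperp & {in Ecentre_perp, adE a =1 adE s}.
Proof.
have [A0 /memv_imgP [s Es ->] A_orth] := exists_orth_proj hs_linear hs_sym adE_hs_pos (adE a).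
exists s => // x x_perp; apply/eqP; rewrite -subr_eq0 -opp_lfunE -add_lfunE -adEB.
have Ex : x \in Eperp by case/memv_Ecentre_perp: x_perp.
apply/eqP/Ecentre_perp_Ecentre_eq0; first exact: Ecentre_perp_adE.
apply: hs_orth_adE_Ecentre Ex => y Ey.
by rewrite adEB -(adELE s) -(adELE y) A_orth // memv_img.
Qed.
End InnerDerivations.

Section BracketIdeal.
Variable s : 'I_r -> V.
Hypothesis s_Eperp : forall k, s k \in Eperp.
Hypothesis s_inner : forall k, {in Ecentre_perp, adE (u k) =1 adE (s k)}.

Definition psi : 'End(V) := linfun (fun w => w + \sum_k B (s k) w *: v k).

Lemma psiE w : psi w = w + \sum_k B (s k) w *: v k.
Proof.
rewrite linfunE // => c w1 w2; rewrite scalerDr addrACA; congr (_ + _).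
rewrite scaler_sumr -big_split; apply: eq_bigr => k _.
by rewrite BDr BZr scalerDl scalerA.
Qed.

Lemma br_Ecentre_perp_graph x y : x \in Eperp -> y \in Ecentre_perp ->
  br x y = psi (piE (br x y)).
Proof.
move=> Ex y_perp; have Ey : y \in Eperp by case/memv_Ecentre_perp: y_perp.
have B_br_Eperp a : B (br x y) a = B y (adE a x).
  by rewrite B_inv (br_anti x) BNr opprK adE_Eperp // B_piEr.
rewrite {1}(br_decomp x y) psiE /vcomp; congr (_ + _); apply: eq_bigr => k _.
rewrite B_piEr // (B_sym (s k)) !B_br_Eperp; congr (_ *: _).
by rewrite -[LHS]opprK -adE_skew // s_inner // adE_skew // opprK.
Qed.

Lemma B_psi w : w \in Eperp -> B (psi w) (psi w) = B w w.
Proof.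
case/memv_Eperp => wu wv; have v_orth x (c : 'I_r -> R) :
    (forall k, B x (v k) = 0) -> B x (\sum_k c k *: v k) = 0.
  by move=> xv; rewrite B_sumr big1 // => k _; rewrite BZr xv mulr0.
rewrite psiE BDl !BDr !v_orth // ?(B_sym _ w) ?v_orth ?addr0 // => k.
by rewrite B_vsum_v.
Qed.

Definition bracket_ideal :=
  <<[seq br x y | x <- vbasis Eperp, y <- vbasis Ecentre_perp]>>%VS.

Lemma br_mem_bracket_ideal x y : x \in Eperp -> y \in Ecentre_perp ->
  br x y \in bracket_ideal.
Proof.
move=> Ex y_perp; rewrite (coord_vbasis Ex) (coord_vbasis y_perp) br_suml.
apply: rpred_sum => k _; rewrite brZl br_sumr; apply/memvZ/rpred_sum => l _.
by rewrite brZr memvZ // memv_span // allpairs_f // mem_nth // size_tuple.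
Qed.

Lemma bracket_ideal_ideal a z : z \in bracket_ideal -> br a z \in bracket_ideal.
Proof.
have br_a_lin c x y : br a (c *: x + y) = c *: br a x + br a y by apply: br_linr.
rewrite -(linfunE br_a_lin) memv_preim; move: z; apply/subvP/span_subvP.
move=> g /allpairsP [[x y] [/= /vbasis_mem Ex /vbasis_mem y_perp ->]].
have Ey : y \in Eperp by case/memv_Ecentre_perp: y_perp.
rewrite -memv_preim linfunE // br_jacobi_der memvD //.
  rewrite (br_Eperp_decomp a Ex) brDl vcomp_centrall addr0.
  exact/br_mem_bracket_ideal/y_perp/adE_mem.
rewrite (br_Eperp_decomp a Ey) brDr vcomp_centralr addr0.
exact/br_mem_bracket_ideal/Ecentre_perp_adE.
Qed.

Lemma bracket_ideal_sub_psi : (bracket_ideal <= psi @: Eperp)%VS.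
Proof.
apply/span_subvP => g /allpairsP [[x y] [/= /vbasis_mem Ex /vbasis_mem y_perp ->]].
by rewrite br_Ecentre_perp_graph // memv_img // piE_Eperp.
Qed.

(* Being the graph of [psi] over a subspace of [Eperp], the ideal is
   positive definite, so it must vanish. *)
Lemma bracket_ideal_eq0 : bracket_ideal = 0%VS.
Proof.
apply/eqP/negPn/negP => I_neq0; apply: (@definite_ideal_decomposes _ 1 B_indec).
- move=> z /(subvP bracket_ideal_sub_psi) /memv_imgP [w Ew ->] psiw_neq0.
  rewrite mul1r B_psi // Eperp_pos //.
  by apply: contra_neq psiw_neq0 => ->; rewrite linear0.
- exact: I_neq0.
- pose i0 := Ordinal r_gt0; exists (v i0).
    by apply: contra_eq_neq (uv_dual i0 i0) => ->; rewrite B0r eqxx eq_sym oner_eq0.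
  move=> z /(subvP bracket_ideal_sub_psi) /memv_imgP [w /memv_Eperp [_ wv] ->].
  by rewrite psiE BDr B_sym wv add0r B_sumr big1 // => k _; rewrite BZr v_iso mulr0.
- exact: bracket_ideal_ideal.
Qed.

Lemma br_Eperp_Ecentre_perp x y : x \in Eperp -> y \in Ecentre_perp -> br x y = 0.
Proof.
move=> Ex y_perp; apply/eqP; rewrite -memv0 -bracket_ideal_eq0.
exact: br_mem_bracket_ideal.
Qed.

End BracketIdeal.

(* [piE (br x y)] is orthogonal to [Ecentre], and central in [Eperp] since
   [Eperp] brackets [Ecentre_perp] to zero. *)
Lemma piE_br_Eperp x y : x \in Eperp -> y \in Eperp -> piE (br x y) = 0.
Proof.
have [X [XE expandE]] := exists_orth_basis B_linear B_sym Eperp_pos.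
have [s s_Eperp s_inner] :=
  fin_all_exists2 (U := fun=> V) (fun k => adE_inner_on_Ecentre_perp XE expandE (u k)).
move=> Ex Ey; set w := piE (br x y).
have w_perp : w \in Ecentre_perp.
  apply/memv_Ecentre_perp; split=> [|c /memv_Ecentre [Ec c_central]]; first exact: piE_Eperp.
  by rewrite B_piEl // B_inv -(B_piEr _ Ey) piE_br_anti c_central // oppr0 B0r oppr0.
apply: (Ecentre_perp_Ecentre_eq0 w_perp); apply/memv_Ecentre.
split=> [|z Ez]; first exact: piE_Eperp.
by rewrite br_anti (br_Eperp_Ecentre_perp s_Eperp s_inner Ez w_perp) oppr0 linear0.
Qed.

Lemma br_Eperp x y : x \in Eperp -> y \in Eperp ->
  br x y = - \sum_i B x (adE (u i) y) *: v i.
Proof.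
move=> Ex Ey; rewrite (br_decomp x y) piE_br_Eperp // add0r /vcomp -sumrN.
apply: eq_bigr => i _; rewrite -scaleNr; congr (_ *: _).
by rewrite B_inv br_anti BNr opprK -(B_piEr _ Ey) -adE_Eperp // B_sym adE_skew.
Qed.

Lemma br_u_Eperp i x : x \in Eperp ->
  br (u i) x = adE (u i) x - \sum_j B (piE (br (u i) (u j))) x *: v j.
Proof.
move=> Ex; rewrite (br_Eperp_decomp (u i) Ex) /vcomp -sumrN; congr (_ + _).
apply: eq_bigr => j _; rewrite -scaleNr; congr (_ *: _).
by rewrite B_inv B_sym B_piEl.
Qed.

Lemma piE_br_br a b c : piE (br a (br b c)) = adE a (piE (br b c)).
Proof. by rewrite adE_Eperp ?piE_Eperp // {1}(br_decomp b c) brDr vcomp_centralr addr0. Qed.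

Lemma adE_u_commute i j x : x \in Eperp ->
  adE (u i) (adE (u j) x) - adE (u j) (adE (u i) x) = 0.
Proof.
move=> Ex; have := congr1 piE (br_jacobi_der (u i) (u j) x).
rewrite (br_decomp (u i) (u j)) brDl vcomp_centrall addr0.
rewrite linearD /= (piE_br_Eperp (piE_Eperp _) Ex) add0r !piE_br_br -!(adE_Eperp _ Ex).
by move=> ->; rewrite subrr.
Qed.

Lemma adE_u_cyclic i j k : adE (u i) (piE (br (u j) (u k))) +
  adE (u j) (piE (br (u k) (u i))) + adE (u k) (piE (br (u i) (u j))) = 0.
Proof.
by have := congr1 piE (br_jacobi (u i) (u j) (u k)); rewrite !linearD /= !piE_br_br linear0.
Qed.

Lemma B_br_br a b c d : B (br a b) (br c d) = B (piE (br a b)) (piE (br c d)).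
Proof.
have vcomp_iso x y : B (vcomp x) (vcomp y) = 0.
  by rewrite B_suml big1 // => k _; rewrite BZl (B_sym (v k)) B_vsum_v mulr0.
rewrite {1}(br_decomp a b) {1}(br_decomp c d) BDl !BDr (B_sym (piE _) (vcomp _)).
by rewrite !(B_vcomp_Eperp _ (piE_Eperp _)) vcomp_iso !addr0.
Qed.

Lemma piE_br_u_cyclic i j k l :
  B (piE (br (u l) (u i))) (piE (br (u j) (u k))) +
  B (piE (br (u l) (u j))) (piE (br (u k) (u i))) +
  B (piE (br (u l) (u k))) (piE (br (u i) (u j))) = 0.
Proof.
have := congr1 (B^~ (u l)) (br_jacobi (u i) (u j) (u k)); rewrite /= !BDl B0l.
rewrite (B_inv (u i) (br (u j) (u k))) (B_inv (u j) (br (u k) (u i))).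
rewrite (B_inv (u k) (br (u i) (u j))) !B_br_br.
rewrite (B_sym (piE (br (u j) (u k)))) (B_sym (piE (br (u k) (u i)))).
rewrite (B_sym (piE (br (u i) (u j)))).
by rewrite (piE_br_anti (u l) (u i)) (piE_br_anti (u l) (u j)) (piE_br_anti (u l) (u k)) !BNl.
Qed.

Lemma dual_frame_structure :
  exists (E : {vspace V}),
  exists (K : 'I_r -> 'I_r -> V) (L : 'I_r -> 'I_r -> 'I_r -> R)
         (J : 'I_r -> 'End(V)),
  [/\
   (((\sum_(i < r) (<[u i]> + <[v i]>)) + E)%VS = fullv /\
    \dim (fullv : {vspace V}) = (2 * r + \dim E)%N /\
    pos_definite B E /\
    (forall i x, x \in E -> B (u i) x = 0 /\ B (v i) x = 0) /\
    (forall i j, B (u i) (v j) = (i == j)%:R) /\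
    (forall i j, B (u i) (u j) = 0 /\ B (v i) (v j) = 0) /\
    (forall x, central br x <-> x \in (\sum_(i < r) <[v i]>)%VS)),
   [/\ (forall i j, K i j \in E /\ K i j = - K j i),
       (forall i j k, L i j k = - L j i k /\ L i j k = - L i k j),
       (forall i, (J i @: E <= E)%VS),
       (forall i x y, x \in E -> y \in E -> B (J i x) y = - B x (J i y)) &
       (forall i j x, x \in E -> J i (J j x) - J j (J i x) = 0)],
   [/\ (forall i j, br (u i) (u j) = K i j + \sum_(k < r) L i j k *: v k),
       (forall i x, x \in E ->
          br (u i) x = J i x - \sum_(j < r) B (K i j) x *: v j),
       (forall x y, x \in E -> y \in E ->
          br x y = - \sum_(i < r) B x (J i y) *: v i) &
       (forall i y, br (v i) y = 0)] &
   [/\ (forall i j k, J i (K j k) + J j (K k i) + J k (K i j) = 0) &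
       (forall i j k l,
          B (K l i) (K j k) + B (K l j) (K k i) + B (K l k) (K i j) = 0)]].
Proof.
have [uvE_full dimV] := span_uv_Eperp.
exists Eperp, (fun i j => piE (br (u i) (u j))),
  (fun i j k => B (br (u i) (u j)) (u k)), (fun i => adE (u i)).
split.
- refine (conj uvE_full (conj dimV (conj Eperp_pos (conj _ (conj uv_dual (conj _ _)))))).
  + by move=> i x /memv_Eperp [xu xv]; rewrite !(B_sym _ x) xu xv.
  + by move=> i j; rewrite u_iso v_iso.
  + exact: central_iff_mem_Zspan.
- split=> [i j|i j k|i|i x y|i j x]; last exact: adE_u_commute.
  + by rewrite piE_Eperp piE_br_anti.
  + by split; [rewrite br_anti BNl | rewrite B_inv B_sym].
  + by apply/subvP => _ /memv_imgP [x _ ->]; apply: adE_mem.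
  + exact: adE_skew.
- split=> [i j|i x|x y|].
  + exact: br_decomp.
  + exact: br_u_Eperp.
  + exact: br_Eperp.
  + exact: v_central.
- split; [exact: adE_u_cyclic | exact: piE_br_u_cyclic].
Qed.

End DualFrame.
End MetricLieAlgebra.

Theorem mainTheorem1 (R : realType) (V : vectType R)
    (br : V -> V -> V) (B : V -> V -> R) (r : nat) :
  is_lie_bracket br -> is_metric br B -> indecomposable br B ->
  has_index B r -> (0 < r)%N -> has_max_isotropic_centre br B r ->
  exists (u v : 'I_r -> V) (E : {vspace V}),
  exists (K : 'I_r -> 'I_r -> V) (L : 'I_r -> 'I_r -> 'I_r -> R)
         (J : 'I_r -> 'End(V)),
  [/\
   (* vector space decomposition g = (+)_i (R u_i (+) R v_i) (+) E *)
   (((\sum_(i < r) (<[u i]> + <[v i]>)) + E)%VS = fullv /\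
    \dim (fullv : {vspace V}) = (2 * r + \dim E)%N /\
    pos_definite B E /\
    (forall i x, x \in E -> B (u i) x = 0 /\ B (v i) x = 0) /\
    (forall i j, B (u i) (v j) = (i == j)%:R) /\
    (forall i j, B (u i) (u j) = 0 /\ B (v i) (v j) = 0) /\
    (forall x, central br x <-> x \in (\sum_(i < r) <[v i]>)%VS)),
   (* the data K, L, J *)
   [/\ (forall i j, K i j \in E /\ K i j = - K j i),
       (forall i j k, L i j k = - L j i k /\ L i j k = - L i k j),
       (forall i, (J i @: E <= E)%VS),
       (forall i x y, x \in E -> y \in E -> B (J i x) y = - B x (J i y)) &
       (forall i j x, x \in E -> J i (J j x) - J j (J i x) = 0)],
   (* the Lie bracket *)
   [/\ (forall i j, br (u i) (u j) = K i j + \sum_(k < r) L i j k *: v k),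
       (forall i x, x \in E ->
          br (u i) x = J i x - \sum_(j < r) B (K i j) x *: v j),
       (forall x y, x \in E -> y \in E ->
          br x y = - \sum_(i < r) B x (J i y) *: v i) &
       (forall i y, br (v i) y = 0)] &
   (* the quadratic relations *)
   [/\ (forall i j k, J i (K j k) + J j (K k i) + J k (K i j) = 0) &
       (forall i j k l,
          B (K l i) (K j k) + B (K l j) (K k i) + B (K l k) (K i j) = 0)]].
Proof.
move=> br_lie B_metric B_indec [_ index_max] r_gt0 [Z [Z_central dimZ Z_iso]].
have [B_linear B_sym B_nondeg _] := B_metric.
subst r; pose v (i : 'I_(\dim Z)) := (vbasis Z)`_i.
have vZ i : v i \in Z by apply/vbasis_mem/mem_nth; rewrite size_tuple.
have [u [uv_dual u_iso]] := isotropic_dual_frame B_linear B_sym B_nondeg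
  (basis_free (vbasisP Z)) (fun i j => Z_iso _ _ (vZ i) (vZ j)).
exists u, v; apply: dual_frame_structure => // i j.
- by apply: Z_iso.
- exact/Z_central/vZ.
Qed.
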